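(* Fix any reasoning logic. If $c$ is a closed computation with $\vdash c:\underline{C}$ and $c\leadsto c'$, then $\vdash c':\underline{C}$ and $[\![\vdash c:\underline{C}]\!] = [\![\vdash c':\underline{C}]\!]$.
   Context: We work with a fine-grain call-by-value calculus of algebraic effects and handlers, parametrised by a reasoning logic $\mathcal{L}$. Syntax. Values $v ::= x \mid () \mid \mathtt{true} \mid \mathtt{false} \mid \mathtt{fun}\ x \mapsto c \mid \mathtt{handler}\,(\mathtt{return}\ x \mapsto c_r;\ h)$. Computations $c ::= \mathtt{if}\ v\ \mathtt{then}\ c_1\ \mathtt{else}\ c_2 \mid v_1\, v_2 \mid \mathtt{return}\ v \mid \mathit{op}(v; y.c) \mid \mathtt{do}\ x \leftarrow c_1\ \mathtt{in}\ c_2 \mid \mathtt{with}\ v\ \mathtt{handle}\ c$. Operation clauses $h$ are finite sets of clauses $\mathit{op}(x;k) \mapsto c_{\mathit{op}}$, at most one per operation name. Operational semantics: $\leadsto$ is the least relation with: $\mathtt{if}\ \mathtt{true}\ \mathtt{then}\ c_1\ \mathtt{else}\ c_2 \leadsto c_1$; $\mathtt{if}\ \mathtt{false}\ \mathtt{then}\ c_1\ \mathtt{else}\ c_2 \leadsto c_2$; $(\mathtt{fun}\ x\mapsto c)\,v \leadsto c[v/x]$; if $c_1\leadsto c_1'$ then $\mathtt{do}\ x\leftarrow c_1\ \mathtt{in}\ c_2 \leadsto \mathtt{do}\ x\leftarrow c_1'\ \mathtt{in}\ c_2$; $\mathtt{do}\ x\leftarrow \mathtt{return}\ v\ \mathtt{in}\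 c \leadsto c[v/x]$; $\mathtt{do}\ x\leftarrow \mathit{op}(v;y.c_1)\ \mathtt{in}\ c_2 \leadsto \mathit{op}(v;y.\,\mathtt{do}\ x\leftarrow c_1\ \mathtt{in}\ c_2)$; if $c\leadsto c'$ then $\mathtt{with}\ v\ \mathtt{handle}\ c\leadsto \mathtt{with}\ v\ \mathtt{handle}\ c'$; with $H=\mathtt{handler}\,(\mathtt{return}\ x\mapsto c_r;\ h)$: $\mathtt{with}\ H\ \mathtt{handle}\ \mathtt{return}\ v \leadsto c_r[v/x]$, and $\mathtt{with}\ H\ \mathtt{handle}\ \mathit{op}(v;y.c)\leadsto c_{\mathit{op}}[v/x,(\mathtt{fun}\ y\mapsto \mathtt{with}\ H\ \mathtt{handle}\ c)/k]$ when $(\mathit{op}(x;k)\mapsto c_{\mathit{op}})\in h$. Types: $A,B ::= \mathtt{unit}\mid\mathtt{bool}\mid A\to\underline{C}\mid \underline{C}\Rightarrow\underline{D}$; $\underline{C},\underline{D} ::= A\,!\,\Sigma/\mathcal{E}$ with $\Sigma$ a finite set of typed operations $\mathit{op}:A_{\mathit{op}}\to B_{\mathit{op}}$ (distinct names) and $\mathcal{E}$ a finite set of equations between templates (templates $T ::= z(v)\mid \mathtt{if}\ v\ \mathtt{then}\ T_1\ \mathtt{else}\ T_2\mid \mathit{op}(v;y.T)$, typed in a value context and a template context of variables $z:A\to *$, with operations drawn from $\Sigma$). Typing: $\Gamma\vdash x:A$ for $(x:A)\in\Gamma$; $():\mathtt{unit}$; $\mathtt{true},\mathtt{false}:\mathtt{bool}$;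 $\Gamma\vdash \mathtt{fun}\ x\mapsto c:A\to\underline{C}$ if $\Gamma,x:A\vdash c:\underline{C}$; $\Gamma\vdash \mathtt{handler}\,(\mathtt{return}\ x\mapsto c_r;h): A\,!\,\Sigma/\mathcal{E}\Rightarrow\underline{D}$ if $\Gamma,x:A\vdash c_r:\underline{D}$ and $\Gamma\vdash h\models_{\mathcal{E},\Sigma}\underline{D}$; $\mathtt{if}\ v\ \mathtt{then}\ c_1\ \mathtt{else}\ c_2:\underline{C}$ if $v:\mathtt{bool}$, $c_i:\underline{C}$; $v_1\,v_2:\underline{C}$ if $v_1:A\to\underline{C}$, $v_2:A$; $\mathtt{return}\ v:A\,!\,\Sigma/\mathcal{E}$ if $v:A$; $\Gamma\vdash\mathit{op}(v;y.c):A\,!\,\Sigma/\mathcal{E}$ if $(\mathit{op}:A_{\mathit{op}}\to B_{\mathit{op}})\in\Sigma$, $\Gamma\vdash v:A_{\mathit{op}}$, $\Gamma,y:B_{\mathit{op}}\vdash c:A\,!\,\Sigma/\mathcal{E}$; $\Gamma\vdash\mathtt{do}\ x\leftarrow c_1\ \mathtt{in}\ c_2:B\,!\,\Sigma/\mathcal{E}$ if $\Gamma\vdash c_1:A\,!\,\Sigma/\mathcal{E}$, $\Gamma,x:A\vdash c_2:B\,!\,\Sigma/\mathcal{E}$; $\mathtt{with}\ v\ \mathtt{handle}\ c:\underline{D}$ if $v:\underline{C}\Rightarrow\underline{D}$, $c:\underline{C}$. Clauses $\Gamma\vdash h:\Sigma\Rrightarrow\underline{D}$ iff $h$ has exactly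 one clause $\mathit{op}(x;k)\mapsto c_{\mathit{op}}$ for each $\mathit{op}\in\Sigma$ and no others, with $\Gamma,x:A_{\mathit{op}},k:B_{\mathit{op}}\to\underline{D}\vdash c_{\mathit{op}}:\underline{D}$. The judgement $\Gamma\vdash h\models_{\mathcal{E},\Sigma}\underline{D}$ is supplied by the logic and can only hold when $\Gamma\vdash h:\Sigma\Rrightarrow\underline{D}$. Denotational semantics (theories ignored): $[\![\mathtt{unit}]\!]=\{\star\}$, $[\![\mathtt{bool}]\!]=\{\mathrm{ff},\mathrm{tt}\}$, $[\![A\to\underline{C}]\!]$ and $[\![\underline{C}\Rightarrow\underline{D}]\!]$ are the sets of all functions $[\![A]\!]\to[\![\underline{C}]\!]$, resp. $[\![\underline{C}]\!]\to[\![\underline{D}]\!]$, and $[\![A\,!\,\Sigma/\mathcal{E}]\!]=[\![\Sigma]\!][\![A]\!]$, where for a set $X$, $[\![\Sigma]\!]X$ is the inductively defined set with elements $\mathrm{in}_{\mathrm{return}}(a)$, $a\in X$, and $\mathrm{in}_{\mathit{op}}(a;\kappa)$ for $(\mathit{op}:A_{\mathit{op}}\to B_{\mathit{op}})\in\Sigma$, $a\in[\![A_{\mathit{op}}]\!]$, $\kappa:[\![B_{\mathit{op}}]\!]\to[\![\Sigma]\!]X$. An interpretation of $\Sigma$ over a set $Y$ is a family of functions $H_{\mathit{op}}:[\![A_{\mathit{op}}]\!]\times([\![B_{\mathit{op}}]\!]\to Y)\to Y$; the free interpretation $F^X_\Sigma$ over $[\![\Sigma]\!]X$ has $(F^X_\Sigma)_{\mathit{op}}(a,\kappa)=\mathrm{in}_{\mathit{op}}(a;\kappa)$.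 For $f:X\to Y$ the lift $f^\dagger_H:[\![\Sigma]\!]X\to Y$ is given by $f^\dagger_H(\mathrm{in}_{\mathrm{return}}(x))=f(x)$, $f^\dagger_H(\mathrm{in}_{\mathit{op}}(x;\kappa))=H_{\mathit{op}}(x,f^\dagger_H\circ\kappa)$. $[\![\varepsilon]\!]=\{\star\}$, $[\![\Gamma,x:A]\!]=[\![\Gamma]\!]\times[\![A]\!]$. Typed terms denote maps $[\![\Gamma]\!]\to[\![A]\!]$ (resp. $[\![\underline{C}]\!]$): for $\eta\in[\![\Gamma]\!]$, variables are projections; $()\mapsto\star$, $\mathtt{true}\mapsto\mathrm{tt}$, $\mathtt{false}\mapsto\mathrm{ff}$; $[\![\mathtt{fun}\ x\mapsto c]\!]\eta=\lambda a.[\![c]\!](\eta,a)$; $[\![h]\!]\eta$ is the interpretation of $\Sigma$ over $[\![\underline{D}]\!]$ with $([\![h]\!]\eta)_{\mathit{op}}(a,\kappa)=[\![c_{\mathit{op}}]\!](\eta,a,\kappa)$; $[\![\mathtt{handler}\,(\mathtt{return}\ x\mapsto c_r;h)]\!]\eta=(\lambda a.[\![c_r]\!](\eta,a))^\dagger_{[\![h]\!]\eta}$; $[\![\mathtt{if}\ v\ \mathtt{then}\ c_1\ \mathtt{else}\ c_2]\!]\eta$ is $[\![c_1]\!]\eta$ if $[\![v]\!]\eta=\mathrm{tt}$ and $[\![c_2]\!]\eta$ if it is $\mathrm{ff}$; $[\![v_1\,v_2]\!]\eta=([\![v_1]\!]\eta)([\![v_2]\!]\eta)$; $[\![\mathtt{return}\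 v]\!]\eta=\mathrm{in}_{\mathrm{return}}([\![v]\!]\eta)$; $[\![\mathit{op}(v;y.c)]\!]\eta=\mathrm{in}_{\mathit{op}}([\![v]\!]\eta;\lambda b.[\![c]\!](\eta,b))$; for $c_1:A\,!\,\Sigma/\mathcal{E}$ and $c_2:B\,!\,\Sigma/\mathcal{E}$, $[\![\mathtt{do}\ x\leftarrow c_1\ \mathtt{in}\ c_2]\!]\eta=(\lambda a.[\![c_2]\!](\eta,a))^\dagger_{F^{[\![B]\!]}_\Sigma}([\![c_1]\!]\eta)$; $[\![\mathtt{with}\ v\ \mathtt{handle}\ c]\!]\eta=([\![v]\!]\eta)([\![c]\!]\eta)$. For closed terms the denotation is identified with its value at $\star$.
   Formalization: The reasoning logic's judgement $\Gamma\vdash h\models_{\mathcal{E},\Sigma}\underline{D}$ is moreover closed under weakening, adding a variable to Γ, and under substitution of a closed well-typed value for a variable of Γ. The statement above fails without it. *)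

(* Fine-grain CBV calculus of algebraic effects and handlers,
   parametrised by a reasoning logic.  Variables are de Bruijn indices
   (index 0 = innermost binder). *)
From Stdlib Require Import List Arith.
Import ListNotations.

Set Implicit Arguments.

Definition opname := nat.

Inductive value : Type :=
| VVar (n : nat)
| VUnit
| VTrue
| VFalse
| VFun (c : comp)                       (* fun x |-> c ; c binds x *)
| VHandler (cr : comp) (h : clauses)    (* handler (return x |-> cr; h) *)
with comp : Type :=
| CIf (v : value) (c1 c2 : comp)
| CApp (v1 v2 : value)
| CRet (v : value)
| COp (op : opname) (v : value) (c : comp)   (* op(v; y.c) ; c binds y *)
| CDo (c1 c2 : comp)                          (* do x <- c1 in c2 ; c2 binds x *)
| CWith (v : value) (c : comp)
with clauses : Type :=
| HNil
| HCons (op : opname) (c : comp) (h : clauses).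
(* a clause op(x;k) |-> c : in c, k is index 0 and x is index 1 *)

Fixpoint clause_names (h : clauses) : list opname :=
  match h with HNil => [] | HCons o _ h' => o :: clause_names h' end.

Fixpoint clause_lookup (h : clauses) (o : opname) : option comp :=
  match h with
  | HNil => None
  | HCons o' c h' => if Nat.eqb o o' then Some c else clause_lookup h' o
  end.

Fixpoint clause_in (o : opname) (c : comp) (h : clauses) : Prop :=
  match h with
  | HNil => False
  | HCons o' c' h' => (o = o' /\ c = c') \/ clause_in o c h'
  end.

(* Templates (values inside are in the template's own value context) *)

Inductive template : Type :=
| TApp (z : nat) (v : value)
| TIf (v : value) (T1 T2 : template)
| TOp (op : opname) (v : value) (T : template).    (* op(v; y.T), binds y *)

Inductive vtype : Type :=
| TUnit
| TBool
| TFun (A : vtype) (C : ctype)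
| THandler (C D : ctype)
with ctype : Type :=
| CT (A : vtype) (S : sig) (E : eqs)
with sig : Type :=
| SNil
| SCons (op : opname) (Aop Bop : vtype) (S : sig)
with eqs : Type :=
| ENil
| ECons (Delta : list vtype) (Z : list vtype) (T1 T2 : template) (E : eqs).
(* An equation (Delta ; Z |- T1 = T2): Delta is the value context,
   Z lists the argument types A of the template variables z : A -> * . *)

Fixpoint sig_names (S : sig) : list opname :=
  match S with SNil => [] | SCons o _ _ S' => o :: sig_names S' end.

(* (op : A -> B) \in Sigma  (first occurrence of the name) *)
Inductive sig_has : sig -> opname -> vtype -> vtype -> Type :=
| sh_here : forall o A B S, sig_has (SCons o A B S) o A B
| sh_there : forall o A B o' A' B' S,
    Nat.eqb o o' = false -> sig_has S o A B -> sig_has (SCons o' A' B' S) o A B.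

Definition ctx := list vtype.

Inductive var_in : ctx -> nat -> vtype -> Type :=
| vi_here : forall A G, var_in (A :: G) 0 A
| vi_there : forall A B G n, var_in G n A -> var_in (B :: G) (S n) A.

Fixpoint shift_v (k : nat) (v : value) : value :=
  match v with
  | VVar n => if Nat.ltb n k then VVar n else VVar (S n)
  | VUnit => VUnit
  | VTrue => VTrue
  | VFalse => VFalse
  | VFun c => VFun (shift_c (S k) c)
  | VHandler cr h => VHandler (shift_c (S k) cr) (shift_h (S (S k)) h)
  end
with shift_c (k : nat) (c : comp) : comp :=
  match c with
  | CIf v c1 c2 => CIf (shift_v k v) (shift_c k c1) (shift_c k c2)
  | CApp v1 v2 => CApp (shift_v k v1) (shift_v k v2)
  | CRet v => CRet (shift_v k v)
  | COp o v c => COp o (shift_v k v) (shift_c (S k) c)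
  | CDo c1 c2 => CDo (shift_c k c1) (shift_c (S k) c2)
  | CWith v c => CWith (shift_v k v) (shift_c k c)
  end
with shift_h (k : nat) (h : clauses) : clauses :=
  match h with
  | HNil => HNil
  | HCons o c h' => HCons o (shift_c k c) (shift_h k h')
  end.

(* subst_v k u t : replace variable k by u (u lives in the context of t with
   variable k removed), decrementing the variables above k. *)
Fixpoint subst_v (k : nat) (u : value) (v : value) : value :=
  match v with
  | VVar n => if Nat.ltb n k then VVar n
              else if Nat.eqb n k then u else VVar (pred n)
  | VUnit => VUnit
  | VTrue => VTrue
  | VFalse => VFalse
  | VFun c => VFun (subst_c (S k) (shift_v 0 u) c)
  | VHandler cr h =>
      VHandler (subst_c (S k) (shift_v 0 u) cr)
               (subst_h (S (S k)) (shift_v 0 (shift_v 0 u)) h)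
  end
with subst_c (k : nat) (u : value) (c : comp) : comp :=
  match c with
  | CIf v c1 c2 => CIf (subst_v k u v) (subst_c k u c1) (subst_c k u c2)
  | CApp v1 v2 => CApp (subst_v k u v1) (subst_v k u v2)
  | CRet v => CRet (subst_v k u v)
  | COp o v c => COp o (subst_v k u v) (subst_c (S k) (shift_v 0 u) c)
  | CDo c1 c2 => CDo (subst_c k u c1) (subst_c (S k) (shift_v 0 u) c2)
  | CWith v c => CWith (subst_v k u v) (subst_c k u c)
  end
with subst_h (k : nat) (u : value) (h : clauses) : clauses :=
  match h with
  | HNil => HNil
  | HCons o c h' => HCons o (subst_c k u c) (subst_h k u h')
  end.

(* the same operations on a set of clauses, seen at the level of the
   context in which the handler lives (clause bodies bind x and k) *)
Definition shift_clauses (k : nat) (h : clauses) : clauses :=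
  shift_h (S (S k)) h.
Definition subst_clauses (k : nat) (u : value) (h : clauses) : clauses :=
  subst_h (S (S k)) (shift_v 0 (shift_v 0 u)) h.

Inductive step : comp -> comp -> Prop :=
| st_if_true : forall c1 c2, step (CIf VTrue c1 c2) c1
| st_if_false : forall c1 c2, step (CIf VFalse c1 c2) c2
| st_app : forall c v, step (CApp (VFun c) v) (subst_c 0 v c)
| st_do : forall c1 c1' c2, step c1 c1' -> step (CDo c1 c2) (CDo c1' c2)
| st_do_ret : forall v c, step (CDo (CRet v) c) (subst_c 0 v c)
| st_do_op : forall o v c1 c2,
    step (CDo (COp o v c1) c2) (COp o v (CDo c1 (shift_c 1 c2)))
| st_with : forall v c c', step c c' -> step (CWith v c) (CWith v c')
| st_with_ret : forall cr h v,
    step (CWith (VHandler cr h) (CRet v)) (subst_c 0 v cr)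
| st_with_op : forall cr h o v c cop,
    clause_in o cop h ->
    step (CWith (VHandler cr h) (COp o v c))
         (subst_c 0 v
            (subst_c 0 (shift_v 0 (VFun (CWith (shift_v 0 (VHandler cr h)) c)))
               cop)).

(* Typing, parametrised by the logic's judgement  G |- h |=_{E,Sigma} D *)

Definition models_t : Type := ctx -> clauses -> eqs -> sig -> ctype -> Prop.

Inductive has_v (m : models_t) : ctx -> value -> vtype -> Type :=
| tv_var : forall G n A, var_in G n A -> has_v m G (VVar n) A
| tv_unit : forall G, has_v m G VUnit TUnit
| tv_true : forall G, has_v m G VTrue TBool
| tv_false : forall G, has_v m G VFalse TBool
| tv_fun : forall G c A C, has_c m (A :: G) c C -> has_v m G (VFun c) (TFun A C)
| tv_handler : forall G cr h A S E D,
    has_c m (A :: G) cr D ->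
    cover m G h S D ->
    NoDup (clause_names h) ->
    (forall o, In o (clause_names h) -> In o (sig_names S)) ->
    m G h E S D ->
    has_v m G (VHandler cr h) (THandler (CT A S E) D)
with has_c (m : models_t) : ctx -> comp -> ctype -> Type :=
| tc_if : forall G v c1 c2 C,
    has_v m G v TBool -> has_c m G c1 C -> has_c m G c2 C ->
    has_c m G (CIf v c1 c2) C
| tc_app : forall G v1 v2 A C,
    has_v m G v1 (TFun A C) -> has_v m G v2 A -> has_c m G (CApp v1 v2) C
| tc_ret : forall G v A S E, has_v m G v A -> has_c m G (CRet v) (CT A S E)
| tc_op : forall G o v c Aop Bop A S E,
    sig_has S o Aop Bop -> has_v m G v Aop ->
    has_c m (Bop :: G) c (CT A S E) ->
    has_c m G (COp o v c) (CT A S E)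
| tc_do : forall G c1 c2 A B S E,
    has_c m G c1 (CT A S E) -> has_c m (A :: G) c2 (CT B S E) ->
    has_c m G (CDo c1 c2) (CT B S E)
| tc_with : forall G v c C D,
    has_v m G v (THandler C D) -> has_c m G c C -> has_c m G (CWith v c) D
with cover (m : models_t) : ctx -> clauses -> sig -> ctype -> Type :=
| cov_nil : forall G h D, cover m G h SNil D
| cov_cons : forall G h o Aop Bop S D c,
    clause_lookup h o = Some c ->
    has_c m (TFun Bop D :: Aop :: G) c D ->
    cover m G h S D ->
    cover m G h (SCons o Aop Bop S) D.

Definition clauses_typed (m : models_t) (G : ctx) (h : clauses) (S : sig)
  (D : ctype) : Type :=
  (cover m G h S D * (NoDup (clause_names h) /\
     (forall o, In o (clause_names h) -> In o (sig_names S))))%type.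

(* A reasoning logic: its judgement can only hold for well-typed clauses, and
   it is closed under the structural rules (weakening, substitution of closed
   values) that the syntactic manipulations of the operational semantics need. *)
Record Logic : Type := {
  lmodels : models_t;
  lmodels_typed : forall G h E S D,
    lmodels G h E S D -> inhabited (clauses_typed lmodels G h S D);
  lmodels_weaken : forall G1 G2 B h E S D,
    lmodels (G1 ++ G2) h E S D ->
    lmodels (G1 ++ B :: G2) (shift_clauses (length G1) h) E S D;
  lmodels_subst : forall G1 G2 A v h E S D,
    has_v lmodels [] v A ->
    lmodels (G1 ++ A :: G2) h E S D ->
    lmodels (G1 ++ G2) (subst_clauses (length G1) v h) E S D
}.

(* Denotational semantics (theories ignored) *)

(* [[Sigma]]X : free trees; nodes labelled by operation names *)
Inductive tree (P Q : opname -> Type) (X : Type) : Type :=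
| in_return (x : X)
| in_op (o : opname) (a : P o) (k : Q o -> tree P Q X).
Arguments in_return {P Q X} x.
Arguments in_op {P Q X} o a k.

Fixpoint lift {P Q : opname -> Type} {X Y : Type} (f : X -> Y)
  (H : forall o, P o -> (Q o -> Y) -> Y) (t : tree P Q X) : Y :=
  match t with
  | in_return x => f x
  | in_op o a k => H o a (fun b => lift f H (k b))
  end.

Fixpoint sem_v (A : vtype) : Type :=
  match A with
  | TUnit => unit
  | TBool => bool
  | TFun A C => sem_v A -> sem_c C
  | THandler C D => sem_c C -> sem_c D
  end
with sem_c (C : ctype) : Type :=
  match C with
  | CT A Sg _ => tree (sem_arg Sg) (sem_res Sg) (sem_v A)
  end
with sem_arg (Sg : sig) (o : opname) : Type :=
  match Sg with
  | SNil => Empty_set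
  | SCons o' A _ Sg' => if Nat.eqb o o' then sem_v A else sem_arg Sg' o
  end
with sem_res (Sg : sig) (o : opname) : Type :=
  match Sg with
  | SNil => unit
  | SCons o' _ B Sg' => if Nat.eqb o o' then sem_v B else sem_res Sg' o
  end.

Fixpoint sem_ctx (G : ctx) : Type :=
  match G with
  | [] => unit
  | A :: G' => (sem_ctx G' * sem_v A)%type
  end.

Fixpoint den_var G n A (x : var_in G n A) : sem_ctx G -> sem_v A :=
  match x in var_in G n A return sem_ctx G -> sem_v A with
  | vi_here _ _ => fun eta => snd eta
  | vi_there _ x' => fun eta => den_var x' (fst eta)
  end.

Fixpoint arg_in Sg o A B (p : sig_has Sg o A B) : sem_v A -> sem_arg Sg o :=
  match p in sig_has Sg o A B return sem_v A -> sem_arg Sg o with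
  | @sh_here o A B Sg => fun a =>
      @eq_rect_r bool true (fun b : bool => if b then sem_v A else sem_arg Sg o) a
        (Nat.eqb o o) (Nat.eqb_refl o)
  | @sh_there o A B o' A' B' Sg ne p' => fun a =>
      @eq_rect_r bool false (fun b : bool => if b then sem_v A' else sem_arg Sg o)
        (arg_in p' a) (Nat.eqb o o') ne
  end.

Fixpoint res_out Sg o A B (p : sig_has Sg o A B) : sem_res Sg o -> sem_v B :=
  match p in sig_has Sg o A B return sem_res Sg o -> sem_v B with
  | @sh_here o A B Sg => fun r =>
      eq_rect (Nat.eqb o o) (fun b : bool => if b then sem_v B else sem_res Sg o) r
        true (Nat.eqb_refl o)
  | @sh_there o A B o' A' B' Sg ne p' => fun r =>
      res_out p' (eq_rect (Nat.eqb o o') (fun b : bool => if b then sem_v B' else sem_res Sg o)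
                    r false ne)
  end.

Fixpoint den_v m G v A (d : has_v m G v A) {struct d} : sem_ctx G -> sem_v A :=
  match d in has_v _ G v A return sem_ctx G -> sem_v A with
  | @tv_var _ G n A x => den_var x
  | @tv_unit _ G => fun _ => tt
  | @tv_true _ G => fun _ => true
  | @tv_false _ G => fun _ => false
  | @tv_fun _ G c A C dc => fun eta => fun a => den_c dc (eta, a)
  | @tv_handler _ G cr h A Sg E D dcr dh _ _ _ => fun eta =>
      lift (fun a => den_c dcr (eta, a)) (den_h dh eta)
  end
with den_c m G c C (d : has_c m G c C) {struct d} : sem_ctx G -> sem_c C :=
  match d in has_c _ G c C return sem_ctx G -> sem_c C with
  | @tc_if _ G v c1 c2 C dv d1 d2 => fun eta =>
      if den_v dv eta then den_c d1 eta else den_c d2 eta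
  | @tc_app _ G v1 v2 A C d1 d2 => fun eta => (den_v d1 eta) (den_v d2 eta)
  | @tc_ret _ G v A Sg E dv => fun eta => in_return (den_v dv eta)
  | @tc_op _ G o v c Aop Bop A Sg E p dv dc => fun eta =>
      in_op o (arg_in p (den_v dv eta)) (fun b => den_c dc (eta, res_out p b))
  | @tc_do _ G c1 c2 A B Sg E d1 d2 => fun eta =>
      lift (fun a => den_c d2 (eta, a)) (fun o a k => in_op o a k) (den_c d1 eta)
  | @tc_with _ G v c C D dv dc => fun eta => (den_v dv eta) (den_c dc eta)
  end
with den_h m G h Sg D (d : cover m G h Sg D) {struct d} :
  sem_ctx G -> forall o, sem_arg Sg o -> (sem_res Sg o -> sem_c D) -> sem_c D :=
  match d in cover _ G h Sg D
    return sem_ctx G -> forall o, sem_arg Sg o -> (sem_res Sg o -> sem_c D) -> sem_c D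
  with
  | @cov_nil _ G h D => fun _ o a _ => match a with end
  | @cov_cons _ G h o' Aop Bop Sg D c _ dc dS => fun eta o =>
      match Nat.eqb o o' as b
        return (if b then sem_v Aop else sem_arg Sg o) ->
               ((if b then sem_v Bop else sem_res Sg o) -> sem_c D) -> sem_c D with
      | true => fun a k => den_c dc ((eta, a), k)
      | false => fun a k => den_h dS eta o a k
      end
  end.

(** Preservation is proved together with soundness of the denotation, via
    the two syntactic operations the reduction rules perform: weakening a
    derivation and substituting a closed value both transport typing and
    commute with the denotation (one mutual induction on derivations each;
    the logic's judgement is closed under both by assumption).  For a handled
    operation, the [cover] part of the handler's typing yields the clause
    derivation, whose denotation is exactly [[h]] at the operation, so
    plugging in the argument and the continuation
    [fun y => with H handle c] reproduces the handled tree. *)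
From Stdlib Require Import List Arith Lia.
From Stdlib Require Import Program.Equality FunctionalExtensionality.
Import ListNotations.

Scheme has_v_rect' := Induction for has_v Sort Type
with has_c_rect' := Induction for has_c Sort Type
with cover_rect' := Induction for cover Sort Type.
Combined Scheme typing_rect from has_v_rect', has_c_rect', cover_rect'.

Scheme has_v_ind' := Induction for has_v Sort Prop
with has_c_ind' := Induction for has_c Sort Prop
with cover_ind' := Induction for cover Sort Prop.
Combined Scheme typing_ind from has_v_ind', has_c_ind', cover_ind'.

Lemma clause_names_shift_h k h : clause_names (shift_h k h) = clause_names h.
Proof. induction h; simpl; congruence. Qed.

Lemma clause_names_subst_h k u h : clause_names (subst_h k u h) = clause_names h.
Proof. induction h; simpl; congruence. Qed.

Lemma clause_lookup_shift_h k h o :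
  clause_lookup (shift_h k h) o = option_map (shift_c k) (clause_lookup h o).
Proof. induction h; simpl; auto. destruct (Nat.eqb o op); auto. Qed.

Lemma clause_lookup_subst_h k u h o :
  clause_lookup (subst_h k u h) o = option_map (subst_c k u) (clause_lookup h o).
Proof. induction h; simpl; auto. destruct (Nat.eqb o op); auto. Qed.

Lemma clause_in_names o c h : clause_in o c h -> In o (clause_names h).
Proof. induction h; simpl; intuition. Qed.

Lemma clause_in_lookup o c h :
  clause_in o c h -> NoDup (clause_names h) -> clause_lookup h o = Some c.
Proof.
  induction h as [|o' c' h IH]; simpl; intros Hin Hnd; [contradiction|].
  inversion Hnd as [|? ? Ho' Hnd']; subst.
  destruct Hin as [[-> ->]|Hin].
  - now rewrite Nat.eqb_refl.
  - destruct (Nat.eqb_spec o o'); [subst; now apply clause_in_names in Hin|].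
    auto.
Qed.

Lemma shift_h_id k h :
  (forall o c, clause_in o c h -> shift_c k c = c) -> shift_h k h = h.
Proof.
  induction h as [|o c h IH]; simpl; intros H; auto.
  rewrite (H o c) by now left.
  rewrite IH; [reflexivity|]. intros o' c' Hin; apply (H o'); now right.
Qed.

Lemma var_in_lt G n A (x : var_in G n A) : n < length G.
Proof. induction x; simpl; lia. Qed.

Lemma subst_var_eq k u : subst_v k u (VVar k) = u.
Proof. simpl. now rewrite Nat.ltb_irrefl, Nat.eqb_refl. Qed.

Lemma subst_var_neq k u n :
  n <> k -> subst_v k u (VVar n) = VVar (if n <? k then n else pred n).
Proof.
  intros H. simpl. destruct (n <? k); [reflexivity|].
  now rewrite (proj2 (Nat.eqb_neq _ _) H).
Qed.

Section Closed.

Variable m : models_t.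

Lemma typed_shift_id :
  (forall G v A (d : has_v m G v A) k, length G <= k -> shift_v k v = v) /\
  (forall G c C (d : has_c m G c C) k, length G <= k -> shift_c k c = c) /\
  (forall G h Sg D (d : cover m G h Sg D) o c, clause_lookup h o = Some c ->
     In o (sig_names Sg) -> forall k, 2 + length G <= k -> shift_c k c = c).
Proof.
  apply typing_ind; simpl; intros; try reflexivity; try contradiction;
    try (f_equal; (apply H || apply H0 || apply H1); simpl; lia).
  - destruct (Nat.ltb_spec n k); auto. apply var_in_lt in v. lia.
  - rewrite H by (simpl; lia). f_equal. apply shift_h_id. intros o c0 Hin.
    apply (H0 o c0); [now apply clause_in_lookup | apply i; eapply clause_in_names; eauto | lia].
  - destruct (Nat.eqb_spec o0 o) as [->|Hne].
    + rewrite e in H1. injection H1 as <-. apply H; simpl; lia.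
    + destruct H2 as [->|H2]; [congruence|]. eauto.
Qed.

Lemma closed_shift_v v A (d : has_v m [] v A) k : shift_v k v = v.
Proof. apply (proj1 typed_shift_id _ _ _ d); simpl; lia. Qed.

End Closed.

Fixpoint sem_insert (G1 G2 : ctx) (B : vtype) {struct G1} :
  sem_ctx (G1 ++ G2) -> sem_v B -> sem_ctx (G1 ++ B :: G2) :=
  match G1 with
  | [] => fun eta b => (eta, b)
  | _ :: G1' => fun eta b => (sem_insert G1' G2 B (fst eta) b, snd eta)
  end.

Lemma var_in_weaken G1 G2 B n A (x : var_in (G1 ++ G2) n A) :
  {y : var_in (G1 ++ B :: G2) (if n <? length G1 then n else S n) A |
     forall eta b, den_var y (sem_insert G1 G2 B eta b) = den_var x eta}.
Proof.
  revert n x; induction G1 as [|C G1 IH]; intros n x.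
  - exists (vi_there _ x). reflexivity.
  - simpl in x. dependent destruction x.
    + exists (vi_here _ _). reflexivity.
    + simpl. change (S n <? S (length G1)) with (n <? length G1).
      destruct (IH n x) as [y Hy]. revert y Hy.
      destruct (n <? length G1); intros y Hy; exists (vi_there _ y); intros eta b; apply Hy.
Qed.

Ltac split_context := intros G1 G2 e; subst; unfold eq_rect_r; simpl.

Section Weakening.

Variable L : Logic.
Local Notation m := (lmodels L).
Variable B : vtype.

Definition weakens_v G v A (d : has_v m G v A) : Type :=
  forall G1 G2 (e : G = G1 ++ G2),
  {d' : has_v m (G1 ++ B :: G2) (shift_v (length G1) v) A |
    forall eta b, den_v d' (sem_insert G1 G2 B eta b) = den_v d (eq_rect_r sem_ctx eta e)}.

Definition weakens_c G c C (d : has_c m G c C) : Type :=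
  forall G1 G2 (e : G = G1 ++ G2),
  {d' : has_c m (G1 ++ B :: G2) (shift_c (length G1) c) C |
    forall eta b, den_c d' (sem_insert G1 G2 B eta b) = den_c d (eq_rect_r sem_ctx eta e)}.

Definition weakens_h G h Sg D (d : cover m G h Sg D) : Type :=
  forall G1 G2 (e : G = G1 ++ G2),
  {d' : cover m (G1 ++ B :: G2) (shift_clauses (length G1) h) Sg D |
    forall eta b o a k,
      den_h d' (sem_insert G1 G2 B eta b) o a k = den_h d (eq_rect_r sem_ctx eta e) o a k}.

Lemma weakening :
  ((forall G v A d, weakens_v G v A d) *
   ((forall G c C d, weakens_c G c C d) * (forall G h Sg D d, weakens_h G h Sg D d)))%type.
Proof.
  apply typing_rect; unfold weakens_v, weakens_c, weakens_h.
  - intros G n A x; split_context.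
    destruct (var_in_weaken G1 G2 B _ _ x) as [y Hy]. revert y Hy.
    destruct (n <? length G1); intros y Hy; now exists (tv_var _ y).
  - intros G; split_context. now exists (tv_unit _ _).
  - intros G; split_context. now exists (tv_true _ _).
  - intros G; split_context. now exists (tv_false _ _).
  - intros G c A C ? IHc; split_context.
    destruct (IHc (A :: G1) G2 eq_refl) as [dc Hc]. exists (tv_fun dc).
    intros eta b. extensionality a. apply (Hc (eta, a)).
  - intros G cr h A Sg E D ? IHcr ? IHh nd incl l; split_context.
    destruct (IHcr (A :: G1) G2 eq_refl) as [dcr Hcr], (IHh G1 G2 eq_refl) as [dh Hh].
    pose proof (lmodels_weaken L G1 G2 B h E Sg D l) as lw.
    unfold shift_clauses in *.
    rewrite <- (clause_names_shift_h (S (S (length G1))) h) in nd, incl.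
    exists (tv_handler E dcr dh nd incl lw). intros eta b. simpl. f_equal.
    + extensionality a. apply (Hcr (eta, a)).
    + extensionality o. extensionality a. extensionality k. apply Hh.
  - intros G v c1 c2 C ? IHv ? IH1 ? IH2; split_context.
    destruct (IHv G1 G2 eq_refl) as [dv Hv], (IH1 G1 G2 eq_refl) as [d1 H1],
      (IH2 G1 G2 eq_refl) as [d2 H2].
    exists (tc_if dv d1 d2). intros eta b. simpl. now rewrite Hv, H1, H2.
  - intros G v1 v2 A C ? IH1 ? IH2; split_context.
    destruct (IH1 G1 G2 eq_refl) as [d1 H1], (IH2 G1 G2 eq_refl) as [d2 H2].
    exists (tc_app d1 d2). intros eta b. simpl. now rewrite H1, H2.
  - intros G v A Sg E ? IHv; split_context.
    destruct (IHv G1 G2 eq_refl) as [dv Hv].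
    exists (tc_ret Sg E dv). intros eta b. simpl. now rewrite Hv.
  - intros G o v c Aop Bop A Sg E s ? IHv ? IHc; split_context.
    destruct (IHv G1 G2 eq_refl) as [dv Hv], (IHc (Bop :: G1) G2 eq_refl) as [dc Hc].
    exists (tc_op s dv dc). intros eta b. simpl. rewrite Hv. f_equal.
    extensionality r. apply (Hc (eta, _)).
  - intros G c1 c2 A A' Sg E ? IH1 ? IH2; split_context.
    destruct (IH1 G1 G2 eq_refl) as [d1 H1], (IH2 (A :: G1) G2 eq_refl) as [d2 H2].
    exists (tc_do d1 d2). intros eta b. simpl. rewrite H1. f_equal.
    extensionality r. apply (H2 (eta, _)).
  - intros G v c C D ? IHv ? IHc; split_context.
    destruct (IHv G1 G2 eq_refl) as [dv Hv], (IHc G1 G2 eq_refl) as [dc Hc].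
    exists (tc_with dv dc). intros eta b. simpl. now rewrite Hv, Hc.
  - intros G h D; split_context. exists (cov_nil _ _ _ _). intros _ _ _ [].
  - intros G h o Aop Bop Sg D c lookup ? IHc ? IHh; split_context.
    destruct (IHc (TFun Bop D :: Aop :: G1) G2 eq_refl) as [dc Hc],
      (IHh G1 G2 eq_refl) as [dh Hh].
    assert (lookup' : clause_lookup (shift_clauses (length G1) h) o =
                      Some (shift_c (S (S (length G1))) c))
      by (unfold shift_clauses; now rewrite clause_lookup_shift_h, lookup).
    exists (cov_cons o lookup' dc dh). intros eta b o'. simpl.
    destruct (o' =? o); intros a k.
    + apply (Hc (eta, a, k)).
    + apply Hh.
Qed.

End Weakening.

Lemma weaken_closed_v (L : Logic) v A (dv : has_v (lmodels L) [] v A) G :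
  {d : has_v (lmodels L) G v A | forall eta, den_v d eta = den_v dv tt}.
Proof.
  induction G as [|B G [d Hd]].
  - exists dv. now intros [].
  - destruct (fst (weakening L B) _ _ _ d [] G eq_refl) as [d' Hd']. simpl in d', Hd'.
    revert d' Hd'. rewrite (closed_shift_v _ _ _ dv). intros d' Hd'.
    exists d'. intros [eta b]. now rewrite Hd'.
Qed.

Lemma var_in_subst G1 G2 T n A (x : var_in (G1 ++ T :: G2) n A) :
  ({e : A = T | n = length G1 /\
      forall eta b, den_var x (sem_insert G1 G2 T eta b) = eq_rect_r sem_v b e} +
   {y : var_in (G1 ++ G2) (if n <? length G1 then n else pred n) A |
      n <> length G1 /\
      forall eta b, den_var x (sem_insert G1 G2 T eta b) = den_var y eta})%type.
Proof.
  revert n x; induction G1 as [|C G1 IH]; intros n x; simpl in x.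
  - dependent destruction x.
    + left. now exists eq_refl.
    + right. now exists x.
  - dependent destruction x.
    + right. exists (vi_here _ _). simpl; split; [lia | reflexivity].
    + simpl. change (S n <? S (length G1)) with (n <? length G1).
      destruct (IH n x) as [[e [Hn Hx]] | [y Hy]].
      * left. exists e. split; [now subst | intros eta b; apply Hx].
      * right. revert y Hy. destruct (n <? length G1) eqn:Hlt; intros y [Hn Hy].
        -- exists (vi_there _ y). split; [lia | intros eta b; apply Hy].
        -- apply Nat.ltb_ge in Hlt. destruct n as [|n]; [lia|].
           exists (vi_there _ y). split; [lia | intros eta b; apply Hy].
Qed.

Section Substitution.

Variable L : Logic.
Local Notation m := (lmodels L).
Variables (T : vtype) (v : value) (dv : has_v m [] v T).

Definition substs_v G w A (d : has_v m G w A) : Type :=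
  forall G1 G2 (e : G = G1 ++ T :: G2),
  {d' : has_v m (G1 ++ G2) (subst_v (length G1) v w) A |
    forall eta, den_v d' eta = den_v d (eq_rect_r sem_ctx (sem_insert G1 G2 T eta (den_v dv tt)) e)}.

Definition substs_c G c C (d : has_c m G c C) : Type :=
  forall G1 G2 (e : G = G1 ++ T :: G2),
  {d' : has_c m (G1 ++ G2) (subst_c (length G1) v c) C |
    forall eta, den_c d' eta = den_c d (eq_rect_r sem_ctx (sem_insert G1 G2 T eta (den_v dv tt)) e)}.

Definition substs_h G h Sg D (d : cover m G h Sg D) : Type :=
  forall G1 G2 (e : G = G1 ++ T :: G2),
  {d' : cover m (G1 ++ G2) (subst_clauses (length G1) v h) Sg D |
    forall eta o a k,
      den_h d' eta o a k = den_h d (eq_rect_r sem_ctx (sem_insert G1 G2 T eta (den_v dv tt)) e) o a k}.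

Lemma substitution :
  ((forall G w A d, substs_v G w A d) *
   ((forall G c C d, substs_c G c C d) * (forall G h Sg D d, substs_h G h Sg D d)))%type.
Proof.
  pose proof (closed_shift_v _ _ _ dv) as v_closed.
  apply typing_rect; unfold substs_v, substs_c, substs_h, subst_clauses.
  - intros G n A x G1 G2 e; subst; cbn [eq_rect_r eq_rect eq_sym].
    destruct (var_in_subst G1 G2 T _ _ x) as [[e [-> Hx]] | [y [Hn Hy]]].
    + subst A. rewrite subst_var_eq.
      destruct (weaken_closed_v L _ _ dv (G1 ++ G2)) as [d Hd].
      exists d. intros eta. simpl. now rewrite Hd, Hx.
    + rewrite (subst_var_neq _ _ _ Hn).
      exists (tv_var _ y). intros eta. simpl. now rewrite Hy.
  - intros G; split_context. now exists (tv_unit _ _).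
  - intros G; split_context. now exists (tv_true _ _).
  - intros G; split_context. now exists (tv_false _ _).
  - intros G c A C ? IHc; split_context. rewrite v_closed.
    destruct (IHc (A :: G1) G2 eq_refl) as [dc Hc]. exists (tv_fun dc).
    intros eta. extensionality a. apply (Hc (eta, a)).
  - intros G cr h A Sg E D ? IHcr ? IHh nd incl l; split_context.
    pose proof (lmodels_subst L G1 G2 h E Sg D dv l) as ls.
    unfold subst_clauses in ls. rewrite !v_closed in IHh, ls |- *.
    destruct (IHcr (A :: G1) G2 eq_refl) as [dcr Hcr], (IHh G1 G2 eq_refl) as [dh Hh].
    rewrite <- (clause_names_subst_h (S (S (length G1))) v h) in nd, incl.
    exists (tv_handler E dcr dh nd incl ls). intros eta. simpl. f_equal.
    + extensionality a. apply (Hcr (eta, a)).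
    + extensionality o. extensionality a. extensionality k. apply Hh.
  - intros G w c1 c2 C ? IHw ? IH1 ? IH2; split_context.
    destruct (IHw G1 G2 eq_refl) as [dw Hw], (IH1 G1 G2 eq_refl) as [d1 H1],
      (IH2 G1 G2 eq_refl) as [d2 H2].
    exists (tc_if dw d1 d2). intros eta. simpl. now rewrite Hw, H1, H2.
  - intros G v1 v2 A C ? IH1 ? IH2; split_context.
    destruct (IH1 G1 G2 eq_refl) as [d1 H1], (IH2 G1 G2 eq_refl) as [d2 H2].
    exists (tc_app d1 d2). intros eta. simpl. now rewrite H1, H2.
  - intros G w A Sg E ? IHw; split_context.
    destruct (IHw G1 G2 eq_refl) as [dw Hw].
    exists (tc_ret Sg E dw). intros eta. simpl. now rewrite Hw.
  - intros G o w c Aop Bop A Sg E s ? IHw ? IHc; split_context. rewrite v_closed.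
    destruct (IHw G1 G2 eq_refl) as [dw Hw], (IHc (Bop :: G1) G2 eq_refl) as [dc Hc].
    exists (tc_op s dw dc). intros eta. simpl. rewrite Hw. f_equal.
    extensionality r. apply (Hc (eta, _)).
  - intros G c1 c2 A A' Sg E ? IH1 ? IH2; split_context. rewrite v_closed.
    destruct (IH1 G1 G2 eq_refl) as [d1 H1], (IH2 (A :: G1) G2 eq_refl) as [d2 H2].
    exists (tc_do d1 d2). intros eta. simpl. rewrite H1. f_equal.
    extensionality r. apply (H2 (eta, _)).
  - intros G w c C D ? IHw ? IHc; split_context.
    destruct (IHw G1 G2 eq_refl) as [dw Hw], (IHc G1 G2 eq_refl) as [dc Hc].
    exists (tc_with dw dc). intros eta. simpl. now rewrite Hw, Hc.
  - intros G h D; split_context. exists (cov_nil _ _ _ _). intros _ _ [].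
  - intros G h o Aop Bop Sg D c lookup ? IHc ? IHh; split_context.
    rewrite !v_closed in IHh |- *.
    destruct (IHc (TFun Bop D :: Aop :: G1) G2 eq_refl) as [dc Hc],
      (IHh G1 G2 eq_refl) as [dh Hh].
    assert (lookup' : clause_lookup (subst_h (S (S (length G1))) v h) o =
                      Some (subst_c (S (S (length G1))) v c))
      by now rewrite clause_lookup_subst_h, lookup.
    exists (cov_cons o lookup' dc dh). intros eta o'. simpl.
    destruct (o' =? o); intros a k.
    + apply (Hc (eta, a, k)).
    + apply Hh.
Qed.

End Substitution.

Section Redexes.

Variable L : Logic.
Local Notation m := (lmodels L).

Lemma subst_top {A v} (dv : has_v m [] v A) {c C} (d : has_c m [A] c C) :
  {d' : has_c m [] (subst_c 0 v c) C | den_c d' tt = den_c d (tt, den_v dv tt)}.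
Proof.
  destruct (fst (snd (substitution L _ _ dv)) _ _ _ d [] [] eq_refl) as [d' Hd'].
  exists d'. apply Hd'.
Qed.

Lemma cover_clause {G h Sg D} (cv : cover m G h Sg D) {o A B} (p : sig_has Sg o A B) :
  {c & {dc : has_c m (TFun B D :: A :: G) c D |
    clause_lookup h o = Some c /\
    forall eta a (K : sem_v B -> sem_c D),
      den_h cv eta o (arg_in p a) (fun r => K (res_out p r)) = den_c dc ((eta, a), K)}}.
Proof.
  revert cv; induction p; intros cv; dependent destruction cv.
  - exists c, h0. split; [assumption|]. intros eta a K. simpl.
    generalize (Nat.eqb_refl o). generalize (Nat.eqb o o). intros b Hb. now subst b.
  - destruct (IHp cv) as [c1 [dc1 [Hl Hd]]].
    exists c1, dc1. split; [assumption|]. intros eta a K. simpl.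
    rewrite <- Hd. revert e. generalize (Nat.eqb o o'). intros b e. now subst b.
Qed.

Lemma do_op_preservation o v c1 c2 C (d : has_c m [] (CDo (COp o v c1) c2) C) :
  exists d' : has_c m [] (COp o v (CDo c1 (shift_c 1 c2))) C, den_c d tt = den_c d' tt.
Proof.
  dependent destruction d. dependent destruction d1.
  destruct (fst (snd (weakening L Bop)) _ _ _ d2 [A] [] eq_refl) as [d2' H2].
  exists (tc_op s h (tc_do d1 d2')). simpl. f_equal.
  extensionality r. f_equal. extensionality x. symmetry. apply (H2 (tt, x)).
Qed.

Lemma handle_op_preservation cr h o v c cop D
    (d : has_c m [] (CWith (VHandler cr h) (COp o v c)) D) :
  clause_in o cop h ->
  exists d' : has_c m []
      (subst_c 0 v (subst_c 0 (shift_v 0 (VFun (CWith (shift_v 0 (VHandler cr h)) c))) cop))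
      D,
    den_c d tt = den_c d' tt.
Proof.
  intros Hin. dependent destruction d. dependent destruction h0.
  rename h2 into dcr, c0 into dcov, d into dc.
  dependent destruction dc.
  destruct (cover_clause dcov s) as [c' [dcop [Hl Hcop]]].
  rewrite (clause_in_lookup _ _ _ Hin n) in Hl. injection Hl as <-.
  set (dH := tv_handler E dcr dcov n i l).
  rewrite (closed_shift_v _ _ _ dH).
  destruct (weaken_closed_v L _ _ dH [Bop]) as [dH' HdH'].
  set (dk := tv_fun (tc_with dH' dc)).
  rewrite (closed_shift_v _ _ _ dk).
  destruct (fst (snd (substitution L _ _ dk)) _ _ _ dcop [] [Aop] eq_refl) as [d1 H1].
  destruct (subst_top h0 d1) as [d2 H2].
  exists d2. symmetry. etransitivity; [apply H2|]. rewrite H1. unfold eq_rect_r; simpl.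
  rewrite <- Hcop. f_equal. extensionality y. simpl. now rewrite HdH'.
Qed.

End Redexes.

Theorem proposition6 (L : Logic) (c c' : comp) (C : ctype)
  (d : has_c (lmodels L) [] c C) :
  step c c' ->
  exists d' : has_c (lmodels L) [] c' C,
    den_c d tt = den_c d' tt.
Proof.
  intros Hs. revert C d. induction Hs; intros C d.
  - dependent destruction d. dependent destruction h. now exists d1.
  - dependent destruction d. dependent destruction h. now exists d2.
  - dependent destruction d. dependent destruction h.
    destruct (subst_top L h0 h) as [d' Hd']. now exists d'.
  - dependent destruction d. destruct (IHHs _ d1) as [d1' H1].
    exists (tc_do d1' d2). simpl. now rewrite H1.
  - dependent destruction d. dependent destruction d1.
    destruct (subst_top L h d2) as [d' Hd']. now exists d'.
  - apply do_op_preservation.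
  - dependent destruction d. destruct (IHHs _ d) as [d' Hd'].
    exists (tc_with h d'). simpl. now rewrite Hd'.
  - dependent destruction d. dependent destruction h0. dependent destruction d.
    destruct (subst_top L h0 h2) as [d' Hd']. now exists d'.
  - now apply handle_op_preservation.
Qed.
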